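(* Let $\mathcal{JS}=(\mathcal F,\mathcal F_d,R,\mathcal B)$ be a justification system whose frame is complementary and whose branch evaluation $\mathcal B$ is consistent. Let $\tau$ be a positional (respectively general) strategy for $F$, $x\in\mathcal F_d$, and $n$ the node of $J_\tau(x)$ labelled $\sim x$ (respectively the root node of the tree $J_\tau(x)$, corresponding to the one-state path $x$). Then for every interpretation $\mathcal I$, $$\mathrm{val}(J_\tau(x),n,\mathcal I)=\sim\bigvee_{\sigma\in\mathfrak S_g(T)}u(x,\sigma,\tau).$$
   Context: Let $\mathcal F$ be a set (fact space) containing $\mathcal L=\{\mathbf t,\mathbf f,\mathbf u\}$ with an involution $\sim$ satisfying $\sim\mathbf t=\mathbf f$, $\sim\mathbf u=\mathbf u$, $\sim x\ne x$ for $x\ne\mathbf u$; $\sim A=\{\sim a:a\in A\}$. Truth order $\mathbf f<_t\mathbf u<_t\mathbf t$; $\bigwedge,\bigvee$ are glb/lub in $(\mathcal L,\le_t)$; $\sim$ reverses $\le_t$. A justification frame is $\mathcal{JF}=(\mathcal F,\mathcal F_d,R)$ with $\mathcal F_d\subseteq\mathcal F$, $\sim\mathcal F_d=\mathcal F_d$, $\mathcal F_d\cap\mathcal L=\emptyset$, $R\subseteq\mathcal F_d\times2^{\mathcal F}$ a set of rules $x\gets A$ with nonempty bodies, every $x\in\mathcal F_d$ heading a rule; $\mathcal F_o=\mathcal F\setminus\mathcal F_d$. A selection function for $x\in\mathcal F_d$ assigns to every body $A$ of a rule $x\gets A$ an element $s(A)\in A$; $\mathrm{Im}(s)$ is its image.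 $R^*$ is the set of rules $\sim x\gets\sim\mathrm{Im}(s)$ ($x\in\mathcal F_d$, $s$ a selection function for $x$); the frame is complementary if $R^*=R$. A justification is a directed graph $(N,E)$ with labelling $\ell:N\to\mathcal F$ such that every internal node $n$ has $\ell(n)\in\mathcal F_d$ and $\ell(n)\gets\{\ell(m):(n,m)\in E\}\in R$; locally complete if no leaf is labelled by a defined fact. A $\mathcal{JF}$-branch is an infinite sequence of defined facts or a finite sequence $x_0\to\cdots\to x_k$ ($k\ge1$) with $x_0,\dots,x_{k-1}\in\mathcal F_d$, $x_k\in\mathcal F_o$; $\sim b$ applies $\sim$ elementwise. $B_J(n)$ is the set of label sequences of maximal paths of $J$ starting at node $n$. A branch evaluation $\mathcal B$ maps $\mathcal{JF}$-branches to elements of $\mathcal F$; it is consistent if $\mathcal B(\sim b)=\sim\mathcal B(b)$ for all $b$. An interpretation is $\mathcal I:\mathcal F\to\mathcal L$ with $\mathcal I(\sim x)=\sim\mathcal I(x)$, $\mathcal I(l)=l$ on $\mathcal L$. $\mathrm{val}(J,n,\mathcal I)=\bigwedge_{b\in B_J(n)}\mathcal I(\mathcal B(b))$. Game graph $G_{\mathcal{JF}}$: states $S_T=\mathcal F$ (owned by $T$), $S_F=\{r_{x\gets A}:x\gets A\in R\}$ (owned by $F$), edges $(x,r_{x\gets A})$ and $(r_{x\gets A},y)$ for each rule $x\gets A$, $y\in A$. A play is an infinite path or a finite path ending in a state with no outgoing edge. A general strategy for $P\in\{T,F\}$ maps each finite path whose last state $s\in S_P$ has an outgoing edge to an outgoing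 edge of $s$; positional strategies depend only on the last state; $\mathfrak S_g(P)$ is the set of general strategies. A path $s_0s_1\cdots$ is consistent with a strategy $\rho$ of $P$ if $\rho(s_0\cdots s_i)=(s_i,s_{i+1})$ whenever $s_i\in S_P$ and $s_{i+1}$ exists; $\mathrm{play}(s,\sigma,\tau)$ is the unique play from $s$ consistent with $\sigma$ (for $T$) and $\tau$ (for $F$). For a play $p$, $b_p$ deletes rule symbols; $u(x,\sigma,\tau)=\mathcal I(\mathcal B(b_{\mathrm{play}(x,\sigma,\tau)}))$. The play tree of a general strategy $\rho$ in $x$ has as nodes the finite paths from $x$ consistent with $\rho$, labelled by their last state, with edges to one-step extensions; the play graph of a positional $\rho$ in $x$ is the subgraph of $G_{\mathcal{JF}}$ of states and edges on paths from $x$ consistent with $\rho$. Filtering out rule symbols: delete rule-symbol nodes and add $(n,m)$ whenever $(n,k),(k,m)$ were edges with $k$ a rule-symbol node. For a strategy $\tau$ of $F$, $J_\tau(x)$ is the filtered play graph (positional $\tau$) or filtered play tree (general $\tau$) of $\tau$ in $x$ with every label $y$ replaced by $\sim y$. *)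

From Stdlib Require Import List Arith ClassicalEpsilon.
Import ListNotations.
Set Implicit Arguments.
Unset Strict Implicit.

Inductive tv := Tt | Ff | Uu.

Definition tneg (v : tv) : tv :=
  match v with Tt => Ff | Ff => Tt | Uu => Uu end.

Definition tv_rank (v : tv) : nat :=
  match v with Ff => 0 | Uu => 1 | Tt => 2 end.
Definition tv_le (a b : tv) : Prop := tv_rank a <= tv_rank b.

Definition is_glb (S : tv -> Prop) (v : tv) : Prop :=
  (forall w, S w -> tv_le v w) /\
  (forall z, (forall w, S w -> tv_le z w) -> tv_le z v).
Definition is_lub (S : tv -> Prop) (v : tv) : Prop :=
  (forall w, S w -> tv_le w v) /\
  (forall z, (forall w, S w -> tv_le w z) -> tv_le v z).

Definition tv_inf (S : tv -> Prop) : tv := epsilon (inhabits Tt) (is_glb S).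
Definition tv_sup (S : tv -> Prop) : tv := epsilon (inhabits Ff) (is_lub S).

(* A set of facts containing L (via the injection emb) with involution ~ *)
Record fact_space := {
  fact :> Type;
  emb : tv -> fact;
  fneg : fact -> fact;
  emb_inj : forall a b, emb a = emb b -> a = b;
  fneg_invol : forall x, fneg (fneg x) = x;
  fneg_t : fneg (emb Tt) = emb Ff;
  fneg_u : fneg (emb Uu) = emb Uu;
  fneg_neq : forall x, x <> emb Uu -> fneg x <> x }.

Arguments emb {f} _.
Arguments fneg {f} _.

Record jframe (FS : fact_space) := {
  Fd : FS -> Prop;
  rule : FS -> (FS -> Prop) -> Prop;
  Fd_neg : forall x, Fd (fneg x) <-> Fd x;
  Fd_L : forall l, ~ Fd (emb l);
  rule_head : forall x A, rule x A -> Fd x;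
  rule_nonempty : forall x A, rule x A -> exists y, A y;
  rule_total : forall x, Fd x -> exists A, rule x A }.


Definition selection (FS : fact_space) (JF : jframe FS) (x : FS)
  (s : (FS -> Prop) -> FS) : Prop :=
  forall A, rule JF x A -> A (s A).

(* R^* : rules ~x <- ~Im(s) *)
Definition rule_star (FS : fact_space) (JF : jframe FS) (h : FS)
  (Bd : FS -> Prop) : Prop :=
  exists x s, Fd JF x /\ selection JF x s /\ h = fneg x /\
    (forall z, Bd z <-> exists A, rule JF x A /\ z = fneg (s A)).

Definition complementary (FS : fact_space) (JF : jframe FS) : Prop :=
  forall h Bd, rule JF h Bd <-> rule_star JF h Bd.

Inductive branch (F : Type) := BInf (b : nat -> F) | BFin (l : list F).
Arguments BInf {F} _.
Arguments BFin {F} _.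

Definition is_branch (FS : fact_space) (JF : jframe FS) (b : branch FS) : Prop :=
  match b with
  | BInf g => forall k, Fd JF (g k)
  | BFin l => exists l' y, l = l' ++ [y] /\ l' <> [] /\
                Forall (Fd JF) l' /\ ~ Fd JF y
  end.

Definition neg_branch (FS : fact_space) (b : branch FS) : branch FS :=
  match b with
  | BInf g => BInf (fun k => fneg (g k))
  | BFin l => BFin (map fneg l)
  end.

Definition consistent_be (FS : fact_space) (JF : jframe FS)
  (B : branch FS -> FS) : Prop :=
  forall b, is_branch JF b -> B (neg_branch b) = fneg (B b).

Definition is_interp (FS : fact_space) (Iv : FS -> tv) : Prop :=
  (forall x, Iv (fneg x) = tneg (Iv x)) /\ (forall l, Iv (emb l) = l).

(* ST x : state x in S_T = F ; SF x A : rule symbol r_{x <- A} (only those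
   with rule x A occur in edges) *)
Inductive state (F : Type) := ST (x : F) | SF (x : F) (A : F -> Prop).
Arguments ST {F} _.
Arguments SF {F} _ _.

Definition edge (FS : fact_space) (JF : jframe FS) (s s' : state FS) : Prop :=
  match s, s' with
  | ST x, SF y A => x = y /\ rule JF y A
  | SF x A, ST y => rule JF x A /\ A y
  | _, _ => False
  end.

Definition has_out (FS : fact_space) (JF : jframe FS) (s : state FS) : Prop :=
  exists s', edge JF s s'.

Inductive player := PT | PF.

Definition owned (F : Type) (P : player) (s : state F) : Prop :=
  match P, s with
  | PT, ST _ => True
  | PF, SF _ _ => True
  | _, _ => False
  end.

Definition is_T (F : Type) (s : state F) : Prop :=
  match s with ST _ => True | SF _ _ => False end.

Definition st_fact (F : Type) (s : state F) : F :=
  match s with ST y => y | SF y _ => y end.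

Definition last_opt (A : Type) (l : list A) : option A := hd_error (rev l).

Definition is_fpath (FS : fact_space) (JF : jframe FS) (p : list (state FS)) : Prop :=
  p <> [] /\
  forall i s s', nth_error p i = Some s -> nth_error p (S i) = Some s' ->
    edge JF s s'.

(* strategies: a general strategy maps a finite path (listed from its first
   state) to the next state, i.e. to the edge (last state, next state) *)
Definition strat (F : Type) := list (state F) -> state F.
Definition pstrat (F : Type) := state F -> state F.

Definition valid_gen (FS : fact_space) (JF : jframe FS) (P : player)
  (rho : strat FS) : Prop :=
  forall p s, is_fpath JF p -> last_opt p = Some s -> owned P s ->
    has_out JF s -> edge JF s (rho p).

Definition valid_pos (FS : fact_space) (JF : jframe FS) (P : player)
  (tau : pstrat FS) : Prop :=
  forall s, owned P s -> has_out JF s -> edge JF s (tau s).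

Definition gen_of_pos (FS : fact_space) (tau : pstrat FS) : strat FS :=
  fun p => tau (last p (ST (emb Tt))).

Inductive play (F : Type) := PInf (s : nat -> state F) | PFin (l : list (state F)).
Arguments PInf {F} _.
Arguments PFin {F} _.

Definition is_play (FS : fact_space) (JF : jframe FS) (p : play FS) : Prop :=
  match p with
  | PInf s => forall i, edge JF (s i) (s (S i))
  | PFin l => is_fpath JF l /\ forall s, last_opt l = Some s -> ~ has_out JF s
  end.

Definition starts_at (F : Type) (s0 : state F) (p : play F) : Prop :=
  match p with
  | PInf s => s 0 = s0
  | PFin l => hd_error l = Some s0
  end.

Definition consistent (F : Type) (rho : strat F) (P : player) (p : play F) : Prop :=
  match p with
  | PInf s => forall i, owned P (s i) -> rho (map s (seq 0 (S i))) = s (S i)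
  | PFin l => forall i si si', nth_error l i = Some si ->
      nth_error l (S i) = Some si' -> owned P si -> rho (firstn (S i) l) = si'
  end.

Definition the_play (FS : fact_space) (JF : jframe FS) (s0 : state FS)
  (sigma tau : strat FS) : play FS :=
  epsilon (inhabits (PFin []))
    (fun p => starts_at s0 p /\ is_play JF p /\ consistent sigma PT p /\
              consistent tau PF p).

(* b_p: delete the rule symbols.  Plays from a fact alternate
   fact, rule, fact, ... so in the infinite case the facts are at even
   positions. *)
Definition b_of_play (F : Type) (p : play F) : branch F :=
  match p with
  | PInf s => BInf (fun k => st_fact (s (2 * k)))
  | PFin l => BFin (flat_map (fun s => match s with ST y => [y] | SF _ _ => [] end) l)
  end.

Definition u (FS : fact_space) (JF : jframe FS) (B : branch FS -> FS)
  (Iv : FS -> tv) (x : FS) (sigma tau : strat FS) : tv :=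
  Iv (B (b_of_play (the_play JF (ST x) sigma tau))).

Record jgraph (F : Type) := {
  jnode : Type;
  jedge : jnode -> jnode -> Prop;
  jlab : jnode -> F }.
Arguments jnode {F} _.
Arguments jedge {F} _ _ _.
Arguments jlab {F} _ _.

(* b in B_J(n): b is the label sequence of a maximal path of J from n *)
Definition in_BJ (F : Type) (J : jgraph F) (n : jnode J) (b : branch F) : Prop :=
  match b with
  | BInf g => exists f : nat -> jnode J, f 0 = n /\
      (forall i, jedge J (f i) (f (S i))) /\ (forall i, g i = jlab J (f i))
  | BFin l => exists ns : list (jnode J), hd_error ns = Some n /\
      (forall i m m', nth_error ns i = Some m -> nth_error ns (S i) = Some m' ->
         jedge J m m') /\
      (forall m, last_opt ns = Some m -> forall m', ~ jedge J m m') /\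
      l = map (jlab J) ns
  end.

Arguments in_BJ {F} J n b.

Definition val (FS : fact_space) (J : jgraph FS) (n : jnode J)
  (B : branch FS -> FS) (Iv : FS -> tv) : tv :=
  tv_inf (fun v => exists b, in_BJ J n b /\ v = Iv (B b)).

Definition filter_neg (FS : fact_space) (N : Type) (E : N -> N -> Prop)
  (lab : N -> state FS) : jgraph FS :=
  {| jnode := { n : N | is_T (lab n) };
     jedge := fun n m => E (proj1_sig n) (proj1_sig m) \/
        exists k, ~ is_T (lab k) /\ E (proj1_sig n) k /\ E k (proj1_sig m);
     jlab := fun n => fneg (st_fact (lab (proj1_sig n))) |}.

Inductive reach_pos (FS : fact_space) (JF : jframe FS) (tau : pstrat FS)
  (x : FS) : state FS -> Prop :=
  | rp_refl : reach_pos JF tau x (ST x)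
  | rp_step : forall s s', reach_pos JF tau x s -> edge JF s s' ->
      (owned PF s -> s' = tau s) -> reach_pos JF tau x s'.

Definition J_pos (FS : fact_space) (JF : jframe FS) (tau : pstrat FS) (x : FS)
  : jgraph FS :=
  @filter_neg FS { s : state FS | reach_pos JF tau x s }
    (fun a b => edge JF (proj1_sig a) (proj1_sig b) /\
                (owned PF (proj1_sig a) -> proj1_sig b = tau (proj1_sig a)))
    (fun a => proj1_sig a).

Definition root_pos (FS : fact_space) (JF : jframe FS) (tau : pstrat FS) (x : FS)
  : jnode (J_pos JF tau x) :=
  exist (fun n : { s : state FS | reach_pos JF tau x s } => is_T (proj1_sig n))
    (exist _ (ST x) (rp_refl JF tau x)) I.

Definition tree_node (FS : fact_space) (JF : jframe FS) (tau : strat FS) (x : FS)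
  (p : list (state FS)) : Prop :=
  is_fpath JF p /\ hd_error p = Some (ST x) /\ consistent tau PF (PFin p).

Definition J_gen (FS : fact_space) (JF : jframe FS) (tau : strat FS) (x : FS)
  : jgraph FS :=
  @filter_neg FS { p : list (state FS) | tree_node JF tau x p }
    (fun a b => exists s, proj1_sig b = proj1_sig a ++ [s])
    (fun a => last (proj1_sig a) (ST x)).

Lemma tree_root (FS : fact_space) (JF : jframe FS) (tau : strat FS) (x : FS) :
  tree_node JF tau x [ST x].
Proof.
  split; [split; [discriminate|] | split; [reflexivity|]].
  - intros [|i] s s' _ H; simpl in H; [discriminate|destruct i; discriminate].
  - intros [|i] si si' _ H; simpl in H; [discriminate|destruct i; discriminate].
Qed.

Definition root_gen (FS : fact_space) (JF : jframe FS) (tau : strat FS) (x : FS)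
  : jnode (J_gen JF tau x) :=
  exist (fun n : { p : list (state FS) | tree_node JF tau x p } =>
           is_T (last (proj1_sig n) (ST x)))
    (exist _ [ST x] (tree_root JF tau x)) I.

From Stdlib Require Import List Arith Lia Classical ClassicalEpsilon
  FunctionalExtensionality ProofIrrelevance.
Import ListNotations.

(* Both J_tau(x) (the filtered, negated play graph of a positional tau and
   the filtered, negated play tree of a general tau) are instances of one
   construction: a graph (N, E, lab) rooted at r that "unfolds" the plays from
   x consistent with tau (record [unfolds]), filtered to its fact nodes with
   labels negated.  For any such unfolding we show that the maximal paths of
   the filtered graph from the root are exactly the negated branches of the
   plays from x consistent with tau ([filtered_branch_play],
   [play_filtered_branch]).  Independently, the plays from x consistent with
   tau are exactly the plays play(x, sigma, tau) for valid strategies sigma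
   of T ([outcomes_against], which rests on existence and uniqueness of
   plays).  As B is consistent and I commutes with ~, the values of the
   negated branches are the negated outcomes, and De Morgan in the truth
   order ([inf_of_negations]) turns the meet over branches into the negated
   join over strategies ([unfolding_value]).  The theorem follows by checking
   that the play graph and the play tree are unfoldings. *)

(** The three-valued truth lattice. *)

Lemma tv_rank_inj (a b : tv) : tv_rank a = tv_rank b -> a = b.
Proof. destruct a, b; simpl; congruence. Qed.

(* L is a finite chain, so every subset has a greatest lower bound ... *)
Lemma glb_exists (S : tv -> Prop) : exists v, is_glb S v.
Proof.
  destruct (classic (S Ff)) as [HF|HF]; [|destruct (classic (S Uu)) as [HU|HU]].
  - exists Ff; split; [intros w _; unfold tv_le; simpl; lia|].
    intros z Hz; apply Hz, HF.
  - exists Uu; split; [intros [] Hw; unfold tv_le; simpl; try lia; contradiction|].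
    intros z Hz; apply Hz, HU.
  - exists Tt; split; [intros [] Hw; unfold tv_le; simpl; try lia; contradiction|].
    intros [] _; unfold tv_le; simpl; lia.
Qed.

Lemma lub_exists (S : tv -> Prop) : exists v, is_lub S v.
Proof.
  destruct (classic (S Tt)) as [HT|HT]; [|destruct (classic (S Uu)) as [HU|HU]].
  - exists Tt; split; [intros [] _; unfold tv_le; simpl; lia|].
    intros z Hz; apply Hz, HT.
  - exists Uu; split; [intros [] Hw; unfold tv_le; simpl; try lia; contradiction|].
    intros z Hz; apply Hz, HU.
  - exists Ff; split; [intros [] Hw; unfold tv_le; simpl; try lia; contradiction|].
    intros [] _; unfold tv_le; simpl; lia.
Qed.

Lemma glb_unique (S : tv -> Prop) (v w : tv) : is_glb S v -> is_glb S w -> v = w.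
Proof.
  intros [Hv Hv'] [Hw Hw']. apply tv_rank_inj.
  specialize (Hv' w Hw). specialize (Hw' v Hv). unfold tv_le in *. lia.
Qed.

Lemma tv_inf_spec (S : tv -> Prop) : is_glb S (tv_inf S).
Proof. unfold tv_inf. apply epsilon_spec, glb_exists. Qed.

Lemma tv_sup_spec (S : tv -> Prop) : is_lub S (tv_sup S).
Proof. unfold tv_sup. apply epsilon_spec, lub_exists. Qed.

Lemma tneg_antitone (a b : tv) : tv_le a b -> tv_le (tneg b) (tneg a).
Proof. destruct a, b; unfold tv_le; simpl; lia. Qed.

Lemma tneg_involutive (a : tv) : tneg (tneg a) = a.
Proof. destruct a; reflexivity. Qed.

Lemma inf_of_negations (S1 S2 : tv -> Prop) :
  (forall w, S1 w <-> exists v, S2 v /\ w = tneg v) ->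
  tv_inf S1 = tneg (tv_sup S2).
Proof.
  intros HS. apply (glb_unique S1); [apply tv_inf_spec|].
  destruct (tv_sup_spec S2) as [Hub Hleast]. split.
  - intros w Hw. apply HS in Hw. destruct Hw as [v [Hv ->]]. apply tneg_antitone, Hub, Hv.
  - intros z Hz. rewrite <- (tneg_involutive z). apply tneg_antitone, Hleast.
    intros w Hw. rewrite <- (tneg_involutive w). apply tneg_antitone, Hz, HS. eauto.
Qed.

(* A play is coded by a sequence s of states and an optional last index:
   [play_of s None] is the infinite play s and [play_of s (Some m)] the finite
   play s 0, ..., s m; [in_dom o i] says that index i belongs to the play. *)
Definition in_dom (o : option nat) (i : nat) : Prop :=
  match o with None => True | Some m => i <= m end.

Notation prefix s i := (map s (seq 0 (S i))).

Definition play_of {F : Type} (s : nat -> state F) (o : option nat) : play F :=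
  match o with None => PInf s | Some m => PFin (prefix s m) end.

Lemma in_dom_le (o : option nat) (i j : nat) : j <= i -> in_dom o i -> in_dom o j.
Proof. destruct o; simpl; auto; lia. Qed.

Lemma in_dom_S (o : option nat) (i : nat) : in_dom o (S i) -> in_dom o i.
Proof. apply in_dom_le; lia. Qed.

Lemma in_dom_ext (o1 o2 : option nat) :
  (forall i, in_dom o1 i <-> in_dom o2 i) -> o1 = o2.
Proof.
  intros H. destruct o1 as [m1|], o2 as [m2|]; simpl in H; auto.
  - f_equal. specialize (H m1) as H1. specialize (H m2) as H2. intuition lia.
  - exfalso. specialize (H (S m1)). intuition lia.
  - exfalso. specialize (H (S m2)). intuition lia.
Qed.

Lemma nth_error_prefix {A : Type} (s : nat -> A) (m i : nat) :
  nth_error (prefix s m) i = if Nat.leb i m then Some (s i) else None.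
Proof.
  rewrite nth_error_map, nth_error_seq.
  destruct (Nat.ltb_spec i (S m)), (Nat.leb_spec i m); simpl; try lia; reflexivity.
Qed.

Lemma firstn_prefix {A : Type} (s : nat -> A) (m i : nat) :
  i <= m -> firstn (S i) (prefix s m) = prefix s i.
Proof.
  intros H. rewrite firstn_map. f_equal.
  replace (S m) with (S i + (m - i)) by lia.
  rewrite seq_app, firstn_app, length_seq, Nat.sub_diag, app_nil_r.
  apply firstn_all2. rewrite length_seq. lia.
Qed.

Lemma last_prefix {A : Type} (s : nat -> A) (m : nat) (d : A) : last (prefix s m) d = s m.
Proof. rewrite seq_S, map_app. apply last_last. Qed.

Lemma last_opt_prefix {A : Type} (s : nat -> A) (m : nat) :
  last_opt (prefix s m) = Some (s m).
Proof. unfold last_opt. rewrite seq_S, map_app, rev_app_distr. reflexivity. Qed.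

Lemma prefix_S {A : Type} (s : nat -> A) (i : nat) : prefix s (S i) = prefix s i ++ [s (S i)].
Proof. rewrite (seq_S (S i)), map_app. reflexivity. Qed.

Lemma prefix_inj {A : Type} (s : nat -> A) (i j : nat) : prefix s i = prefix s j -> i = j.
Proof. intros H. apply (f_equal (@length A)) in H. rewrite !length_map, !length_seq in H. lia. Qed.

Lemma list_as_prefix {A : Type} (l : list A) (d : A) :
  l <> [] -> l = prefix (fun j => nth j l d) (length l - 1).
Proof.
  intros Hl. replace (S (length l - 1)) with (length l) by (destruct l; [congruence|simpl; lia]).
  clear Hl. induction l as [|a l IH]; [reflexivity|]. simpl. f_equal.
  rewrite <- seq_shift, map_map. exact IH.
Qed.

Lemma last_opt_last {A : Type} (l : list A) (s d : A) : last_opt l = Some s -> last l d = s.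
Proof.
  intros H. destruct l as [|a l] using rev_ind; [discriminate|].
  unfold last_opt in H. rewrite rev_app_distr in H. injection H as <-. apply last_last.
Qed.

Fixpoint chain {A : Type} (R : A -> A -> Prop) (l : list A) : Prop :=
  match l with
  | a :: ((b :: _) as t) => R a b /\ chain R t
  | _ => True
  end.

Lemma chain_snoc {A : Type} (R : A -> A -> Prop) (l : list A) (b d : A) :
  chain R l -> l <> [] -> R (last l d) b -> chain R (l ++ [b]).
Proof.
  induction l as [|a [|a' l] IH]; [congruence|simpl; tauto|].
  intros [Hr Hc] _ Hl. split; [exact Hr|]. apply IH; [exact Hc|discriminate|exact Hl].
Qed.

Lemma chain_prefix {A : Type} (R : A -> A -> Prop) (a : nat -> A) (n : nat) :
  (forall j, j < n -> R (a j) (a (S j))) -> chain R (prefix a n).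
Proof.
  induction n as [|n IH]; intros H; [simpl; exact I|].
  rewrite prefix_S. apply chain_snoc with (d := a 0).
  - apply IH. intros j Hj. apply H. lia.
  - simpl. discriminate.
  - rewrite last_prefix. apply H. lia.
Qed.

Lemma chain_nth {A : Type} (R : A -> A -> Prop) (l : list A) :
  chain R l -> forall i a b, nth_error l i = Some a -> nth_error l (S i) = Some b -> R a b.
Proof.
  induction l as [|a0 [|a1 l] IH]; intros Hc i a b Ha Hb;
    [destruct i; discriminate|destruct i as [|[]]; discriminate|].
  destruct Hc as [H1 H2]. destruct i as [|i].
  - injection Ha as <-. injection Hb as <-. exact H1.
  - exact (IH H2 i a b Ha Hb).
Qed.

Lemma chain_map {A B : Type} (R : A -> A -> Prop) (R' : B -> B -> Prop) (f : A -> B) (l : list A) :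
  (forall a b, R a b -> R' (f a) (f b)) -> chain R l -> chain R' (map f l).
Proof.
  intros HR. induction l as [|a [|b l] IH]; simpl; auto.
  intros [H1 H2]. split; [apply HR, H1|apply IH, H2].
Qed.

Lemma last_map_nonempty {A B : Type} (f : A -> B) (l : list A) (d : B) (d' : A) :
  l <> [] -> last (map f l) d = f (last l d').
Proof.
  induction l as [|a [|b l] IH]; intros Hne; [congruence|reflexivity|].
  change (last (f b :: map f l) d = f (last (b :: l) d')). apply IH. discriminate.
Qed.

Lemma steps_snoc {A : Type} (q : list A) (t d : A) (Q : nat -> A -> A -> Prop) : q <> [] ->
  (forall i a b, nth_error (q ++ [t]) i = Some a -> nth_error (q ++ [t]) (S i) = Some b -> Q i a b)
  <-> (forall i a b, nth_error q i = Some a -> nth_error q (S i) = Some b -> Q i a b) /\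
      Q (length q - 1) (last q d) t.
Proof.
  intros Hne. destruct (exists_last Hne) as [l [c ->]]. clear Hne.
  rewrite last_last, length_app. replace (length l + length [c] - 1) with (length l) by (simpl; lia).
  assert (Hlast : nth_error ((l ++ [c]) ++ [t]) (length l) = Some c)
    by (rewrite <- app_assoc, nth_error_app2, Nat.sub_diag by lia; reflexivity).
  assert (Hnext : nth_error ((l ++ [c]) ++ [t]) (S (length l)) = Some t)
    by (rewrite <- app_assoc, nth_error_app2 by lia;
        replace (S (length l) - length l) with 1 by lia; reflexivity).
  split.
  - intros H. split; [|exact (H _ _ _ Hlast Hnext)]. intros i a b Ha Hb.
    apply H; rewrite nth_error_app1; auto; apply nth_error_Some; congruence.
  - intros [H Hl] i a b Ha Hb.
    destruct (Nat.lt_total (S i) (length (l ++ [c]))) as [Hi|[Hi|Hi]].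
    + rewrite nth_error_app1 in Ha, Hb by lia. eauto.
    + rewrite length_app in Hi. simpl in Hi. replace i with (length l) in * by lia.
      rewrite Hlast in Ha. rewrite Hnext in Hb. injection Ha as <-. injection Hb as <-. exact Hl.
    + exfalso. assert (nth_error ((l ++ [c]) ++ [t]) (S i) = None)
        by (apply nth_error_None; rewrite !length_app in *; simpl in *; lia).
      congruence.
Qed.

Lemma least_witness (P : nat -> Prop) :
  (exists n, P n) -> exists m, P m /\ forall j, j < m -> ~ P j.
Proof.
  intros [n Hn]. induction n as [n IH] using lt_wf_ind.
  destruct (classic (exists j, j < n /\ P j)) as [[j [Hj HPj]]|Hnone].
  - exact (IH j Hj HPj).
  - exists n. split; [exact Hn|]. intros j Hj HPj. apply Hnone. eauto.
Qed.

Section Game.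

Variable FS : fact_space.
Variable JF : jframe FS.

Lemma play_of_starts (s : nat -> state FS) (o : option nat) (s0 : state FS) :
  starts_at s0 (play_of s o) <-> s 0 = s0.
Proof. destruct o; simpl; [split; congruence|tauto]. Qed.

Lemma prefix_is_fpath (s : nat -> state FS) (m : nat) :
  is_fpath JF (prefix s m) <-> (forall i, S i <= m -> edge JF (s i) (s (S i))).
Proof.
  unfold is_fpath. split.
  - intros [_ H] i Hi. apply (H i); rewrite nth_error_prefix;
      destruct (Nat.leb_spec i m), (Nat.leb_spec (S i) m); try lia; reflexivity.
  - intros H. split; [discriminate|]. intros i a b Ha Hb.
    rewrite nth_error_prefix in Ha, Hb.
    destruct (Nat.leb_spec (S i) m); [|discriminate].
    destruct (Nat.leb_spec i m); [|lia]. injection Ha as <-. injection Hb as <-. auto.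
Qed.

Lemma play_of_is_play (s : nat -> state FS) (o : option nat) :
  is_play JF (play_of s o) <->
  (forall i, in_dom o (S i) -> edge JF (s i) (s (S i))) /\
  (forall m, o = Some m -> ~ has_out JF (s m)).
Proof.
  destruct o as [m|]; cbn [play_of is_play].
  - rewrite prefix_is_fpath, last_opt_prefix. split.
    + intros [H1 H2]. split; [exact H1|]. intros m' [= <-]. apply H2; reflexivity.
    + intros [H1 H2]. split; [exact H1|]. intros a [= <-]. apply H2; reflexivity.
  - split; [intros H; split; [intros i _; apply H|discriminate]|].
    intros [H _] i. apply H. exact I.
Qed.

Lemma play_of_consistent (rho : strat FS) (P : player) (s : nat -> state FS) (o : option nat) :
  consistent rho P (play_of s o) <->
  (forall i, in_dom o (S i) -> owned P (s i) -> rho (prefix s i) = s (S i)).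
Proof.
  destruct o as [m|]; cbn [play_of consistent].
  2:{ split; intros H i; [intros _|]; apply H. exact I. }
  split.
  - intros H i Hi Ho. simpl in Hi. rewrite <- (firstn_prefix s m i) by lia.
    apply (H i (s i) (s (S i))); [| |exact Ho]; rewrite nth_error_prefix;
      destruct (Nat.leb_spec i m), (Nat.leb_spec (S i) m); try lia; reflexivity.
  - intros H i a b Ha Hb Ho. rewrite nth_error_prefix in Ha, Hb.
    destruct (Nat.leb_spec (S i) m); [|discriminate].
    destruct (Nat.leb_spec i m); [|lia]. injection Ha as <-. injection Hb as <-.
    rewrite firstn_prefix by lia. auto.
Qed.

Lemma play_as_play_of (p : play FS) : is_play JF p -> exists s o, p = play_of s o.
Proof.
  destruct p as [s|l].
  - intros _. exists s, None. reflexivity.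
  - intros [[Hne _] _]. exists (fun j => nth j l (ST (emb Tt))), (Some (length l - 1)).
    cbn [play_of]. f_equal. apply list_as_prefix, Hne.
Qed.

Lemma play_of_ext (s1 s2 : nat -> state FS) (o : option nat) :
  (forall i, in_dom o i -> s1 i = s2 i) -> play_of s1 o = play_of s2 o.
Proof.
  intros H. destruct o as [m|]; cbn [play_of]; f_equal.
  - apply map_ext_in. intros j Hj. apply in_seq in Hj. apply H. simpl; lia.
  - apply functional_extensionality. intros; apply H; exact I.
Qed.

(** Existence and uniqueness of play(s, sigma, tau). *)

Definition mover (sigma tau : strat FS) (a : state FS) : strat FS :=
  match a with ST _ => sigma | SF _ _ => tau end.

Definition run (sigma tau : strat FS) (s : nat -> state FS) (o : option nat) : Prop :=
  is_play JF (play_of s o) /\ consistent sigma PT (play_of s o) /\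
  consistent tau PF (play_of s o).

Definition plays_out (s0 : state FS) (sigma tau : strat FS) (p : play FS) : Prop :=
  starts_at s0 p /\ is_play JF p /\ consistent sigma PT p /\ consistent tau PF p.

Lemma run_next (sigma tau : strat FS) (s : nat -> state FS) (o : option nat) (i : nat) :
  run sigma tau s o -> in_dom o (S i) -> s (S i) = mover sigma tau (s i) (prefix s i).
Proof.
  intros [_ [Hs Ht]] Hi. rewrite play_of_consistent in Hs, Ht.
  destruct (s i) eqn:E; simpl; symmetry; [apply Hs|apply Ht]; rewrite ?E; simpl; auto.
Qed.

Lemma run_extends (sigma tau : strat FS) (s1 s2 : nat -> state FS) (o1 o2 : option nat) (n : nat) :
  run sigma tau s1 o1 -> run sigma tau s2 o2 ->
  in_dom o1 (S n) -> in_dom o2 n -> s1 n = s2 n -> in_dom o2 (S n).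
Proof.
  intros [H1 _] [H2 _] Hn1 Hn2 Heq. apply play_of_is_play in H1, H2.
  destruct o2 as [m|]; simpl in *; [|exact I].
  destruct (Nat.eq_dec n m) as [<-|]; [|lia]. exfalso.
  apply (proj2 H2 n eq_refl). rewrite <- Heq. exists (s1 (S n)). apply H1, Hn1.
Qed.

Lemma runs_agree (sigma tau : strat FS) (s1 s2 : nat -> state FS) (o1 o2 : option nat) :
  run sigma tau s1 o1 -> run sigma tau s2 o2 -> s1 0 = s2 0 ->
  forall n, (in_dom o1 n <-> in_dom o2 n) /\ (in_dom o1 n -> forall j, j <= n -> s1 j = s2 j).
Proof.
  intros R1 R2 H0. induction n as [|n [Hdom Heq]].
  - split; [destruct o1, o2; simpl; split; lia|]. intros _ j Hj. replace j with 0 by lia. exact H0.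
  - assert (Hn : in_dom o1 n -> s1 n = s2 n) by (intros H; apply Heq; auto).
    assert (Hdom' : in_dom o1 (S n) <-> in_dom o2 (S n)).
    { split; intros H; pose proof (in_dom_S _ _ H) as H'.
      - apply (run_extends sigma tau s1 s2 o1 o2 n R1 R2 H (proj1 Hdom H') (Hn H')).
      - apply (run_extends sigma tau s2 s1 o2 o1 n R2 R1 H (proj2 Hdom H')).
        symmetry. apply Hn, Hdom, H'. }
    split; [exact Hdom'|]. intros H j Hj.
    destruct (Nat.eq_dec j (S n)) as [->|]; [|apply Heq; [apply (in_dom_S _ _ H)|lia]].
    assert (Hpre : prefix s1 n = prefix s2 n).
    { apply map_ext_in. intros j' Hj'. apply in_seq in Hj'.
      apply Heq; [apply (in_dom_S _ _ H)|lia]. }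
    rewrite (run_next sigma tau s1 o1 n R1 H), (run_next sigma tau s2 o2 n R2 (proj1 Hdom' H)).
    rewrite Hpre, Hn by apply (in_dom_S _ _ H). reflexivity.
Qed.

Lemma play_unique (s0 : state FS) (sigma tau : strat FS) (p1 p2 : play FS) :
  plays_out s0 sigma tau p1 -> plays_out s0 sigma tau p2 -> p1 = p2.
Proof.
  intros [A1 [P1 [C1 D1]]] [A2 [P2 [C2 D2]]].
  destruct (play_as_play_of p1 P1) as [s1 [o1 ->]].
  destruct (play_as_play_of p2 P2) as [s2 [o2 ->]].
  rewrite play_of_starts in A1, A2.
  assert (Hagree := runs_agree sigma tau s1 s2 o1 o2 (conj P1 (conj C1 D1))
                      (conj P2 (conj C2 D2)) ltac:(congruence)).
  assert (Ho : o1 = o2) by (apply in_dom_ext; intros i; apply Hagree).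
  subst o2. apply play_of_ext. intros i Hi. apply (proj2 (Hagree i) Hi i), le_n.
Qed.

Lemma mover_valid (sigma tau : strat FS) (p : list (state FS)) (a : state FS) :
  valid_gen JF PT sigma -> valid_gen JF PF tau ->
  is_fpath JF p -> last_opt p = Some a -> has_out JF a -> edge JF a (mover sigma tau a p).
Proof.
  intros Vs Vt Hp Hl Ho. destruct a; [apply Vs|apply Vt]; simpl; auto.
Qed.

(* The first n+1 states reached when both players move by their strategies
   from s0 (a player without a valid move still produces some state). *)
Fixpoint run_prefix (s0 : state FS) (sigma tau : strat FS) (n : nat) : list (state FS) :=
  match n with
  | 0 => [s0]
  | S n => let p := run_prefix s0 sigma tau n in
           p ++ [mover sigma tau (last p (ST (emb Tt))) p]
  end.

Definition run_seq (s0 : state FS) (sigma tau : strat FS) (i : nat) : state FS :=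
  last (run_prefix s0 sigma tau i) (ST (emb Tt)).

Lemma run_prefix_eq (s0 : state FS) (sigma tau : strat FS) (i : nat) :
  run_prefix s0 sigma tau i = prefix (run_seq s0 sigma tau) i.
Proof.
  induction i as [|i IH]; [reflexivity|].
  rewrite prefix_S, <- IH. unfold run_seq. cbn [run_prefix]. rewrite last_last. reflexivity.
Qed.

Lemma run_seq_next (s0 : state FS) (sigma tau : strat FS) (i : nat) :
  run_seq s0 sigma tau (S i) =
  mover sigma tau (run_seq s0 sigma tau i) (prefix (run_seq s0 sigma tau) i).
Proof.
  rewrite <- run_prefix_eq. unfold run_seq at 1. cbn [run_prefix]. apply last_last.
Qed.

Lemma run_seq_edges (s0 : state FS) (sigma tau : strat FS) (n : nat) :
  valid_gen JF PT sigma -> valid_gen JF PF tau ->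
  (forall j, j < n -> has_out JF (run_seq s0 sigma tau j)) ->
  forall j, j < n -> edge JF (run_seq s0 sigma tau j) (run_seq s0 sigma tau (S j)).
Proof.
  intros Vs Vt. induction n as [|n IH]; intros Hout j Hj; [lia|].
  destruct (Nat.eq_dec j n) as [->|]; [|apply IH; auto; lia].
  rewrite run_seq_next. apply mover_valid; auto; [|apply last_opt_prefix].
  apply prefix_is_fpath. intros i Hi. apply IH; auto; lia.
Qed.

Lemma run_seq_run (s0 : state FS) (sigma tau : strat FS) (o : option nat) :
  valid_gen JF PT sigma -> valid_gen JF PF tau ->
  (forall j, in_dom o (S j) -> has_out JF (run_seq s0 sigma tau j)) ->
  (forall m, o = Some m -> ~ has_out JF (run_seq s0 sigma tau m)) ->
  run sigma tau (run_seq s0 sigma tau) o.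
Proof.
  intros Vs Vt Hout Hdead. set (s := run_seq s0 sigma tau).
  assert (Hmove : forall P rho i, owned P (s i) -> mover sigma tau (s i) = rho ->
                    rho (prefix s i) = s (S i)).
  { intros P rho i _ <-. symmetry. apply run_seq_next. }
  split; [|split].
  - apply play_of_is_play. split; [|exact Hdead]. intros i Hi.
    apply (run_seq_edges s0 sigma tau (S i)); auto.
    intros j Hj. apply Hout, (in_dom_le o (S i)); auto; lia.
  - apply play_of_consistent. intros i _ Ho. apply (Hmove PT).
    + exact Ho.
    + destruct (s i); [reflexivity|contradiction].
  - apply play_of_consistent. intros i _ Ho. apply (Hmove PF).
    + exact Ho.
    + destruct (s i); [contradiction|reflexivity].
Qed.

(* The run stops at its first dead end, if any. *)
Lemma play_exists (s0 : state FS) (sigma tau : strat FS) :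
  valid_gen JF PT sigma -> valid_gen JF PF tau -> exists p, plays_out s0 sigma tau p.
Proof.
  intros Vs Vt. set (s := run_seq s0 sigma tau).
  destruct (classic (exists n, ~ has_out JF (s n))) as [Hdead|Hlive].
  - destruct (least_witness _ Hdead) as [m [Hm Hbefore]].
    destruct (run_seq_run s0 sigma tau (Some m)) as [P [C D]]; auto.
    + intros j Hj. apply NNPP, Hbefore. simpl in Hj. lia.
    + intros m' [= <-]. exact Hm.
    + exists (play_of s (Some m)). split; [apply play_of_starts; reflexivity|auto].
  - destruct (run_seq_run s0 sigma tau None) as [P [C D]]; auto.
    + intros j _. apply NNPP. intros H. apply Hlive. eauto.
    + discriminate.
    + exists (play_of s None). split; [apply play_of_starts; reflexivity|auto].
Qed.

Lemma the_play_spec (s0 : state FS) (sigma tau : strat FS) :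
  valid_gen JF PT sigma -> valid_gen JF PF tau ->
  plays_out s0 sigma tau (the_play JF s0 sigma tau).
Proof. intros Vs Vt. unfold the_play. apply epsilon_spec, play_exists; auto. Qed.

(* Every play is the play of some valid strategy of T against any strategy of
   F it is consistent with: T just follows the play (and moves arbitrarily
   off it). *)
Lemma play_followed_by_T (s : nat -> state FS) (o : option nat) :
  is_play JF (play_of s o) ->
  exists sigma, valid_gen JF PT sigma /\ consistent sigma PT (play_of s o).
Proof.
  intros Hp. apply play_of_is_play in Hp. destruct Hp as [Hedge _].
  set (on_play := fun q => exists i, in_dom o (S i) /\ q = prefix s i).
  set (good := fun q t =>
     (exists i, in_dom o (S i) /\ q = prefix s i /\ t = s (S i)) \/
     (~ on_play q /\ forall a, last_opt q = Some a -> has_out JF a -> edge JF a t)).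
  assert (Hgood : forall q, exists t, good q t).
  { intros q. destruct (classic (on_play q)) as [[i [Hi Hq]]|Hoff].
    - exists (s (S i)). left. eauto.
    - destruct (classic (exists a, last_opt q = Some a /\ has_out JF a))
        as [[a [Ha [t Ht]]]|Hstuck].
      + exists t. right. split; [exact Hoff|]. intros a' Ha' _. congruence.
      + exists (ST (emb Tt)). right. split; [exact Hoff|]. intros a Ha Ho. exfalso. eauto. }
  set (sigma := fun q => epsilon (inhabits (ST (emb Tt))) (good q)).
  assert (Hsig : forall q, good q (sigma q)) by (intros q; apply epsilon_spec, Hgood).
  exists sigma. split.
  - intros q a _ Hl _ Hout. destruct (Hsig q) as [[i [Hi [-> ->]]]|[_ H]]; auto.
    rewrite last_opt_prefix in Hl. injection Hl as <-. apply Hedge, Hi.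
  - apply play_of_consistent. intros i Hi _.
    destruct (Hsig (prefix s i)) as [[j [Hj [Hq ->]]]|[Hoff _]].
    + apply prefix_inj in Hq. subst j. reflexivity.
    + exfalso. apply Hoff. exists i. auto.
Qed.

Definition play_against (x : FS) (tau : strat FS) (p : play FS) : Prop :=
  starts_at (ST x) p /\ is_play JF p /\ consistent tau PF p.

Lemma outcomes_against {T : Type} (x : FS) (tau : strat FS) (f : play FS -> T) :
  valid_gen JF PF tau ->
  forall v, (exists sigma, valid_gen JF PT sigma /\ v = f (the_play JF (ST x) sigma tau)) <->
            (exists p, play_against x tau p /\ v = f p).
Proof.
  intros Vt v. split.
  - intros [sigma [Vs ->]]. exists (the_play JF (ST x) sigma tau). split; [|reflexivity].
    destruct (the_play_spec (ST x) sigma tau Vs Vt) as [A [B [_ D]]]. split; auto.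
  - intros [p [[A [B C]] ->]]. destruct (play_as_play_of p B) as [s [o ->]].
    destruct (play_followed_by_T s o B) as [sigma [Vs Cs]]. exists sigma. split; [exact Vs|].
    f_equal. apply (play_unique (ST x) sigma tau); [|apply the_play_spec; auto].
    repeat split; auto.
Qed.

(** Branches of plays. *)

Lemma edge_source_defined (a b : state FS) : edge JF a b -> Fd JF (st_fact a).
Proof.
  destruct a as [y|y A], b; simpl; try tauto.
  - intros [-> H]. eapply rule_head; eauto.
  - intros [H _]. eapply rule_head; eauto.
Qed.

Lemma defined_has_out (y : FS) : Fd JF y -> has_out JF (ST y).
Proof. intros Hy. destruct (rule_total Hy) as [A HA]. exists (SF y A). simpl. auto. Qed.

Lemma rule_state_has_out (a : state FS) (y : FS) (A : FS -> Prop) :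
  edge JF a (SF y A) -> has_out JF (SF y A).
Proof.
  destruct a; simpl; [|tauto]. intros [_ HA]. destruct (rule_nonempty HA) as [z Hz].
  exists (ST z). simpl. auto.
Qed.

Definition fact_list (l : list (state FS)) : list FS :=
  flat_map (fun s => match s with ST y => [y] | SF _ _ => [] end) l.

Lemma finite_play_end (x : FS) (s : nat -> state FS) (m : nat) :
  Fd JF x -> s 0 = ST x -> is_play JF (play_of s (Some m)) ->
  m <> 0 /\ exists y, s m = ST y /\ ~ Fd JF y.
Proof.
  intros Hx H0 Hp. apply play_of_is_play in Hp. destruct Hp as [Hedge Hdead].
  specialize (Hdead m eq_refl).
  assert (Hm : m <> 0) by (intros ->; apply Hdead; rewrite H0; apply defined_has_out, Hx).
  split; [exact Hm|]. destruct (s m) as [y|y A] eqn:Hs.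
  - exists y. split; [reflexivity|]. intros Hy. apply Hdead. apply defined_has_out, Hy.
  - exfalso. apply Hdead. apply (rule_state_has_out (s (m - 1))).
    rewrite <- Hs. replace m with (S (m - 1)) at 2 by lia. apply Hedge. simpl. lia.
Qed.

Lemma play_branch (x : FS) (tau : strat FS) (p : play FS) :
  Fd JF x -> play_against x tau p -> is_branch JF (b_of_play p).
Proof.
  intros Hx [A [B _]]. destruct (play_as_play_of p B) as [s [o ->]].
  rewrite play_of_starts in A.
  destruct o as [m|]; cbn [play_of b_of_play is_branch].
  - destruct (finite_play_end x s m Hx A B) as [Hm [y [Hy Hopen]]].
    apply play_of_is_play in B. destruct B as [Hedge _].
    exists (fact_list (prefix s (m - 1))), y. split; [|split; [|split]].
    + unfold fact_list. replace (S m) with (S (m - 1) + 1) by lia.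
      rewrite seq_app, map_app, flat_map_app. f_equal. simpl.
      replace (S (m - 1)) with m by lia. rewrite Hy. reflexivity.
    + simpl. rewrite A. discriminate.
    + apply Forall_forall. intros z Hz. apply in_flat_map in Hz.
      destruct Hz as [a [Ha Hz]]. apply in_map_iff in Ha. destruct Ha as [j [<- Hj]].
      apply in_seq in Hj. apply edge_source_defined with (b := s (S j)) in Hedge.
      * destruct (s j); simpl in Hz; [|contradiction]. destruct Hz as [<-|[]]. exact Hedge.
      * simpl. lia.
    + exact Hopen.
  - intros k. apply (edge_source_defined _ (s (S (2 * k)))). apply play_of_is_play in B.
    apply B. exact I.
Qed.

Lemma negated_branch_value (B : branch FS -> FS) (Iv : FS -> tv) (x : FS) (tau : strat FS)
  (p : play FS) :
  consistent_be JF B -> is_interp Iv -> Fd JF x -> play_against x tau p ->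
  Iv (B (neg_branch (b_of_play p))) = tneg (Iv (B (b_of_play p))).
Proof.
  intros Hc [Hneg _] Hx Hp. rewrite Hc; [apply Hneg|]. eapply play_branch; eauto.
Qed.

Lemma edge_alternates (a b : state FS) : edge JF a b -> (is_T a <-> ~ is_T b).
Proof. destruct a, b; simpl; tauto. Qed.

Lemma play_parity (x : FS) (s : nat -> state FS) (o : option nat) :
  s 0 = ST x -> (forall i, in_dom o (S i) -> edge JF (s i) (s (S i))) ->
  forall j, in_dom o j -> (is_T (s j) <-> Nat.even j = true).
Proof.
  intros H0 Hedge. induction j as [|j IH]; intros Hj; [rewrite H0; simpl; tauto|].
  pose proof (edge_alternates _ _ (Hedge j Hj)) as Halt.
  pose proof (IH (in_dom_S _ _ Hj)) as Hpar.
  rewrite Nat.even_succ, <- Nat.negb_even.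
  destruct (Nat.even j), (s j), (s (S j)); simpl in *; intuition congruence.
Qed.

Lemma fact_list_alternating (s : nat -> state FS) (K : nat) :
  (forall j, j <= 2 * K -> (is_T (s j) <-> Nat.even j = true)) ->
  fact_list (prefix s (2 * K)) = map (fun k => st_fact (s (2 * k))) (seq 0 (S K)).
Proof.
  induction K as [|K IH]; intros Hpar.
  - simpl. assert (HT : is_T (s 0)) by (apply Hpar; auto).
    destruct (s 0); [reflexivity|contradiction].
  - replace (S (2 * S K)) with (S (2 * K) + 2) by lia.
    unfold fact_list in *. rewrite seq_app, map_app, flat_map_app, IH by (intros; apply Hpar; lia).
    rewrite (seq_S (S K)), map_app. f_equal.
    assert (Hodd : ~ is_T (s (S (2 * K)))).
    { rewrite Hpar by lia. replace (S (2 * K)) with (2 * K + 1) by lia.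
      rewrite Nat.even_odd. discriminate. }
    assert (Heven : is_T (s (2 * S K))) by (apply Hpar; [lia|apply Nat.even_even]).
    rewrite !Nat.add_0_l. cbn [seq map flat_map app]. replace (2 * S K) with (S (S (2 * K))) in * by lia.
    destruct (s (S (2 * K))); simpl in Hodd; [contradiction|].
    destruct (s (S (S (2 * K)))); simpl in Heven; [reflexivity|contradiction].
Qed.

Lemma chain_fpath (l : list (state FS)) : chain (edge JF) l -> l <> [] -> is_fpath JF l.
Proof. intros Hc Hne. split; [exact Hne|]. apply chain_nth, Hc. Qed.

Lemma fpath_snoc (q : list (state FS)) (t d : state FS) : q <> [] ->
  (is_fpath JF (q ++ [t]) <-> is_fpath JF q /\ edge JF (last q d) t).
Proof.
  intros Hne. unfold is_fpath. rewrite (steps_snoc q t d (fun _ a b => edge JF a b) Hne).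
  split; [intros [_ [H1 H2]]; auto|intros [[_ H1] H2]; split; [|auto]].
  intros H. apply app_eq_nil in H. destruct H as [_ H]. discriminate.
Qed.

Lemma consistent_snoc (rho : strat FS) (P : player) (q : list (state FS)) (t d : state FS) :
  q <> [] ->
  (consistent rho P (PFin (q ++ [t])) <->
   consistent rho P (PFin q) /\ (owned P (last q d) -> rho q = t)).
Proof.
  intros Hne. cbn [consistent].
  rewrite (steps_snoc q t d (fun i a b => owned P a -> rho (firstn (S i) (q ++ [t])) = b) Hne).
  assert (Hfirst : forall i b, nth_error q (S i) = Some b -> firstn (S i) (q ++ [t]) = firstn (S i) q).
  { intros i b Hb. assert (S i < length q) by (apply nth_error_Some; congruence).
    rewrite firstn_app. replace (S i - length q) with 0 by lia. apply app_nil_r. }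
  assert (Hall : firstn (S (length q - 1)) (q ++ [t]) = q).
  { replace (S (length q - 1)) with (length q) by (destruct q; [congruence|simpl; lia]).
    rewrite firstn_app, firstn_all, Nat.sub_diag. apply app_nil_r. }
  rewrite Hall. split; intros [H1 H2]; split; auto; intros i a b Ha Hb;
    [rewrite <- (Hfirst i b Hb)|rewrite (Hfirst i b Hb)]; eauto.
Qed.

End Game.

Section Unfolding.

Variable FS : fact_space.
Variable JF : jframe FS.
Variables (x : FS) (tau : strat FS).
Variables (N : Type) (E : N -> N -> Prop) (lab : N -> state FS) (r : N).

Definition path_from (ps : list N) : Prop := hd_error ps = Some r /\ chain E ps.

(* (N, E, lab) with root r unfolds the plays from x consistent with tau: the
   root is labelled x, E-edges are moves of the game, and along E-paths from
   the root the E-successors of a node are exactly the moves allowed by tau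
   (all moves at T's states, the move chosen by tau at F's states). *)
Record unfolds : Prop := {
  unfold_root : lab r = ST x;
  unfold_edge : forall a b, E a b -> edge JF (lab a) (lab b);
  unfold_follows : forall ps b, path_from ps -> E (last ps r) b ->
    owned PF (lab (last ps r)) -> tau (map lab ps) = lab b;
  unfold_complete : forall ps t, path_from ps -> edge JF (lab (last ps r)) t ->
    (owned PF (lab (last ps r)) -> tau (map lab ps) = t) ->
    exists b, E (last ps r) b /\ lab b = t }.

Hypothesis Hunf : unfolds.
Hypothesis Vt : valid_gen JF PF tau.

Local Notation J := (filter_neg E lab).

Lemma path_from_snoc (ps : list N) (b : N) :
  path_from ps -> E (last ps r) b -> path_from (ps ++ [b]).
Proof.
  intros [Hh Hc] He. destruct ps as [|a ps]; [discriminate|].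
  split; [exact Hh|]. apply chain_snoc with (d := r); [exact Hc|discriminate|exact He].
Qed.

Lemma path_from_prefix (a : nat -> N) (i : nat) :
  a 0 = r -> (forall j, j < i -> E (a j) (a (S j))) -> path_from (prefix a i).
Proof. intros H0 Hc. split; [simpl; congruence|apply chain_prefix, Hc]. Qed.

Lemma path_labels_fpath (ps : list N) : path_from ps -> is_fpath JF (map lab ps).
Proof.
  intros [Hh Hc]. apply chain_fpath.
  - apply (chain_map E); [apply (unfold_edge Hunf)|exact Hc].
  - destruct ps; [discriminate|simpl; discriminate].
Qed.

Lemma E_alternates (a b : N) : E a b -> (is_T (lab a) <-> ~ is_T (lab b)).
Proof. intros H. apply edge_alternates with JF, (unfold_edge Hunf), H. Qed.

(* A rule node reached from the root has a successor: the rule body is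
   nonempty, so tau has a move there, and the unfolding realises it. *)
Lemma rule_node_continues (ps : list N) (b : N) :
  path_from ps -> E (last ps r) b -> ~ is_T (lab b) -> exists c, E b c.
Proof.
  intros Hp He Hb. pose proof (unfold_edge Hunf _ _ He) as Hedge.
  destruct (lab b) as [|y A] eqn:Hlb; [simpl in Hb; tauto|].
  assert (HA : rule JF y A) by (destruct (lab (last ps r)); simpl in Hedge; tauto).
  destruct (rule_nonempty HA) as [z Hz].
  pose proof (path_from_snoc ps b Hp He) as Hp'.
  assert (Hl : last (ps ++ [b]) r = b) by apply last_last.
  assert (Hmove : edge JF (SF y A) (tau (map lab (ps ++ [b])))).
  { apply Vt; [apply path_labels_fpath, Hp'| |exact I|exists (ST z); simpl; auto].
    unfold last_opt. rewrite map_app, rev_app_distr. simpl. rewrite Hlb. reflexivity. }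
  destruct (unfold_complete Hunf (ps ++ [b]) (tau (map lab (ps ++ [b]))) Hp')
    as [c [Hc _]].
  - rewrite Hl, Hlb. exact Hmove.
  - reflexivity.
  - exists c. rewrite <- Hl. exact Hc.
Qed.

Lemma filtered_successor (n : jnode J) (ps : list N) :
  path_from ps -> last ps r = proj1_sig n -> has_out JF (lab (proj1_sig n)) ->
  exists m, jedge J n m.
Proof.
  intros Hp Hl [t Ht]. pose proof (proj2_sig n) as HTn. simpl in HTn.
  destruct (unfold_complete Hunf ps t Hp) as [b [Hb Hlb]].
  { rewrite Hl. exact Ht. }
  { rewrite Hl. intros Ho. exfalso. destruct (lab (proj1_sig n)); contradiction. }
  assert (HTb : ~ is_T (lab b)) by (rewrite Hl in Hb; apply (E_alternates _ _ Hb), HTn).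
  destruct (rule_node_continues ps b Hp Hb HTb) as [c Hc].
  assert (HTc : is_T (lab c)) by (apply NNPP; intros H; apply HTb, (E_alternates _ _ Hc), H).
  exists (exist _ c HTc). right. exists b. rewrite Hl in Hb. auto.
Qed.

Definition middle (n m : jnode J) : N :=
  epsilon (inhabits (proj1_sig n))
    (fun k => ~ is_T (lab k) /\ E (proj1_sig n) k /\ E k (proj1_sig m)).

(* Consecutive fact nodes are never E-adjacent, so every edge of J has a middle. *)
Lemma middle_spec (n m : jnode J) : jedge J n m ->
  ~ is_T (lab (middle n m)) /\ E (proj1_sig n) (middle n m) /\ E (middle n m) (proj1_sig m).
Proof.
  intros [H|H].
  - exfalso. apply (proj1 (E_alternates _ _ H)); [apply (proj2_sig n)|apply (proj2_sig m)].
  - unfold middle. apply epsilon_spec. exact H.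
Qed.

Definition interleave (f : nat -> jnode J) (j : nat) : N :=
  if Nat.even j then proj1_sig (f (Nat.div2 j))
  else middle (f (Nat.div2 j)) (f (S (Nat.div2 j))).

Lemma interleave_even (f : nat -> jnode J) (k : nat) : interleave f (2 * k) = proj1_sig (f k).
Proof. unfold interleave. rewrite Nat.even_even, Nat.div2_double. reflexivity. Qed.

Lemma interleave_odd (f : nat -> jnode J) (k : nat) :
  interleave f (S (2 * k)) = middle (f k) (f (S k)).
Proof.
  unfold interleave. replace (Nat.even (S (2 * k))) with false.
  - rewrite Nat.div2_succ_double. reflexivity.
  - rewrite <- Nat.add_1_r, Nat.even_odd. reflexivity.
Qed.

Definition double (o : option nat) : option nat := option_map (fun K => 2 * K) o.

Lemma interleave_path (f : nat -> jnode J) (o : option nat) :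
  (forall k, in_dom o (S k) -> jedge J (f k) (f (S k))) ->
  forall j, in_dom (double o) (S j) -> E (interleave f j) (interleave f (S j)).
Proof.
  intros Hf j Hj. destruct (Nat.Even_or_Odd j) as [[k ->]|[k ->]].
  - assert (Hk : in_dom o (S k)) by (destruct o; simpl in *; [lia|exact I]).
    rewrite interleave_even, interleave_odd. apply middle_spec, Hf, Hk.
  - assert (Hk : in_dom o (S k)) by (destruct o; simpl in *; [lia|exact I]).
    replace (S (2 * k + 1)) with (2 * S k) by lia. rewrite <- Nat.add_1_r.
    rewrite Nat.add_1_r, interleave_odd, interleave_even. apply middle_spec, Hf, Hk.
Qed.

Lemma filtered_path_play (f : nat -> jnode J) (o : option nat) :
  proj1_sig (f 0) = r ->
  (forall k, in_dom o (S k) -> jedge J (f k) (f (S k))) ->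
  (forall K, o = Some K -> forall m, ~ jedge J (f K) m) ->
  play_against FS JF x tau (play_of (fun j => lab (interleave f j)) (double o)).
Proof.
  intros Hf0 Hf Hmax. set (a := interleave f).
  pose proof (interleave_path f o Hf) as HE.
  assert (Ha0 : a 0 = r) by (unfold a; rewrite <- Hf0; apply (interleave_even f 0)).
  assert (Hpath : forall i, in_dom (double o) i -> path_from (prefix a i)).
  { intros i Hi. apply path_from_prefix; [exact Ha0|].
    intros j Hj. apply HE, (in_dom_le _ i); [lia|exact Hi]. }
  split; [|split].
  - apply play_of_starts. rewrite Ha0. apply (unfold_root Hunf).
  - apply play_of_is_play. split; [intros i Hi; apply (unfold_edge Hunf), HE, Hi|].
    intros m Hm Hout. destruct o as [K|]; [|discriminate]. injection Hm as <-.
    destruct (filtered_successor (f K) (prefix a (2 * K))) as [n Hn].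
    + apply Hpath. simpl; lia.
    + rewrite last_prefix. apply interleave_even.
    + rewrite <- interleave_even. exact Hout.
    + exact (Hmax K eq_refl n Hn).
  - apply play_of_consistent. intros i Hi Ho.
    replace (map (fun j => lab (a j)) (seq 0 (S i))) with (map lab (prefix a i))
      by apply map_map.
    apply (unfold_follows Hunf); [apply Hpath, in_dom_S, Hi| |]; rewrite last_prefix.
    + apply HE, Hi.
    + exact Ho.
Qed.

Lemma filtered_branch_play (Hrt : is_T (lab r)) (b : branch FS) :
  in_BJ J (exist _ r Hrt) b ->
  exists p, play_against FS JF x tau p /\ b = neg_branch (b_of_play p).
Proof.
  destruct b as [g|l]; cbn [in_BJ].
  - intros [f [Hf0 [Hf Hg]]]. exists (play_of (fun j => lab (interleave f j)) None). split.
    + apply (filtered_path_play f None); [rewrite Hf0; reflexivity|intros k _; apply Hf|].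
      discriminate.
    + cbn [play_of b_of_play neg_branch]. f_equal. apply functional_extensionality.
      intros k. rewrite Hg, interleave_even. reflexivity.
  - intros [ns [Hhd [Hns [Hlast ->]]]].
    assert (Hne : ns <> []) by (intros ->; discriminate).
    set (K := length ns - 1). set (f := fun k => nth k ns (exist _ r Hrt)).
    assert (Hns_eq : ns = prefix f K) by apply (list_as_prefix ns _ Hne).
    rewrite Hns_eq in Hhd, Hns, Hlast |- *. clearbody f K. clear ns Hns_eq Hne.
    set (s := fun j => lab (interleave f j)).
    assert (Hplay : play_against FS JF x tau (play_of s (Some (2 * K)))).
    { apply (filtered_path_play f (Some K)).
      - injection Hhd as ->. reflexivity.
      - intros k Hk. simpl in Hk.
        apply (Hns k); rewrite nth_error_prefix;
          destruct (Nat.leb_spec k K), (Nat.leb_spec (S k) K); try lia; reflexivity.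
      - intros K' [= <-]. apply Hlast, last_opt_prefix. }
    exists (play_of s (Some (2 * K))). split; [exact Hplay|].
    destruct Hplay as [Hs0 [Hp _]]. apply play_of_starts in Hs0. apply play_of_is_play in Hp.
    cbn [play_of b_of_play neg_branch]. f_equal.
    fold (fact_list FS (prefix s (2 * K))). rewrite fact_list_alternating.
    + rewrite !map_map. apply map_ext. intros k. unfold s. rewrite interleave_even. reflexivity.
    + intros j Hj. apply (play_parity FS JF x s (Some (2 * K))); [exact Hs0|apply Hp|simpl; lia].
Qed.

Fixpoint lift (s : nat -> state FS) (i : nat) : N :=
  match i with
  | 0 => r
  | S i => epsilon (inhabits r) (fun b => E (lift s i) b /\ lab b = s (S i))
  end.

Lemma lift_spec (s : nat -> state FS) (o : option nat) :
  play_against FS JF x tau (play_of s o) ->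
  forall i, in_dom o i ->
    (forall j, j <= i -> lab (lift s j) = s j) /\
    (forall j, j < i -> E (lift s j) (lift s (S j))).
Proof.
  intros [Hs0 [Hp Hc]]. apply play_of_starts in Hs0. apply play_of_is_play in Hp.
  rewrite play_of_consistent in Hc. destruct Hp as [Hedge _].
  induction i as [|i IH]; intros Hi.
  - split; [|lia]. intros j Hj. replace j with 0 by lia. rewrite Hs0. apply (unfold_root Hunf).
  - destruct (IH (in_dom_S _ _ Hi)) as [Hlab HE].
    assert (Hpath : path_from (prefix (lift s) i)) by (apply path_from_prefix; auto).
    assert (Hmap : map lab (prefix (lift s) i) = prefix s i).
    { rewrite map_map. apply map_ext_in. intros j Hj. apply in_seq in Hj. apply Hlab. lia. }
    assert (Hnext : E (lift s i) (lift s (S i)) /\ lab (lift s (S i)) = s (S i)).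
    { cbn [lift]. apply epsilon_spec. rewrite <- (last_prefix (lift s) i r).
      apply (unfold_complete Hunf _ _ Hpath); rewrite last_prefix, Hlab by lia.
      - apply Hedge, Hi.
      - intros Ho. rewrite Hmap. apply Hc; assumption. }
    split; intros j Hj.
    + destruct (Nat.eq_dec j (S i)) as [->|]; [apply Hnext|apply Hlab; lia].
    + destruct (Nat.eq_dec j i) as [->|]; [apply Hnext|apply HE; lia].
Qed.

Definition fact_node (Hrt : is_T (lab r)) (n : N) : jnode J :=
  match excluded_middle_informative (is_T (lab n)) with
  | left H => exist _ n H
  | right _ => exist _ r Hrt
  end.

Lemma fact_node_val (Hrt : is_T (lab r)) (n : N) :
  is_T (lab n) -> proj1_sig (fact_node Hrt n) = n.
Proof. intros H. unfold fact_node. destruct (excluded_middle_informative _); easy. Qed.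

Lemma fact_node_root (Hrt : is_T (lab r)) : fact_node Hrt r = exist _ r Hrt.
Proof.
  unfold fact_node. destruct (excluded_middle_informative _); [|reflexivity].
  f_equal. apply proof_irrelevance.
Qed.

Lemma fact_nodes_path (Hrt : is_T (lab r)) (a : nat -> N) (o : option nat) :
  (forall j, in_dom o (S j) -> E (a j) (a (S j))) ->
  (forall j, in_dom o j -> (is_T (lab (a j)) <-> Nat.even j = true)) ->
  (forall k, in_dom o (2 * k) -> proj1_sig (fact_node Hrt (a (2 * k))) = a (2 * k)) /\
  (forall k, in_dom o (2 * S k) ->
     jedge J (fact_node Hrt (a (2 * k))) (fact_node Hrt (a (2 * S k)))).
Proof.
  intros HE Hpar.
  assert (Hval : forall k, in_dom o (2 * k) -> proj1_sig (fact_node Hrt (a (2 * k))) = a (2 * k)).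
  { intros k Hk. apply fact_node_val, Hpar; [exact Hk|apply Nat.even_even]. }
  split; [exact Hval|]. intros k Hk. right. exists (a (S (2 * k))).
  assert (Hk1 : in_dom o (S (2 * k))) by (apply (in_dom_le o (2 * S k)); [lia|exact Hk]).
  rewrite !Hval by (auto; apply in_dom_S, Hk1). split; [|split].
  - rewrite Hpar, <- Nat.add_1_r, Nat.even_odd by exact Hk1. discriminate.
  - apply HE, Hk1.
  - replace (2 * S k) with (S (S (2 * k))) in * by lia. apply HE, Hk.
Qed.

(* Conversely, the negated branch of a play from x consistent with tau is a
   branch of J from the root: lift the play and keep its fact nodes. *)
Lemma play_filtered_branch (Hrt : is_T (lab r)) (s : nat -> state FS) (o : option nat) :
  Fd JF x -> play_against FS JF x tau (play_of s o) ->
  in_BJ J (exist _ r Hrt) (neg_branch (b_of_play (play_of s o))).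
Proof.
  intros Hx Hplay. pose proof (lift_spec s o Hplay) as Hlift.
  destruct Hplay as [Hs0 [Hp _]]. apply play_of_starts in Hs0.
  pose proof Hp as Hp'. apply play_of_is_play in Hp. destruct Hp as [Hedge Hdead].
  pose proof (play_parity FS JF x s o Hs0 Hedge) as Hpar.
  set (a := lift s). set (f := fun k => fact_node Hrt (a (2 * k))).
  assert (Hlab : forall i, in_dom o i -> lab (a i) = s i) by (intros i Hi; apply (Hlift i Hi); lia).
  destruct (fact_nodes_path Hrt a o) as [Hval Hf].
  { intros i Hi. apply (Hlift (S i) Hi). lia. }
  { intros j Hj. rewrite Hlab by exact Hj. apply Hpar, Hj. }
  assert (Hf0 : f 0 = exist _ r Hrt) by apply fact_node_root.
  assert (Hflab : forall k, in_dom o (2 * k) -> jlab J (f k) = fneg (st_fact (s (2 * k)))).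
  { intros k Hk. unfold f. cbn [jlab filter_neg]. rewrite Hval, Hlab by exact Hk. reflexivity. }
  destruct o as [m|]; cbn [play_of b_of_play neg_branch in_BJ].
  - destruct (finite_play_end FS JF x s m Hx Hs0 Hp') as [_ [y [Hy _]]].
    assert (Hm : Nat.even m = true) by (apply Hpar; [simpl; lia|rewrite Hy; exact I]).
    apply Nat.even_spec in Hm. destruct Hm as [K ->].
    exists (prefix f K). split; [|split; [|split]].
    + simpl. rewrite Hf0. reflexivity.
    + intros i m1 m2 H1 H2. rewrite nth_error_prefix in H1, H2.
      destruct (Nat.leb_spec (S i) K); [|discriminate].
      destruct (Nat.leb_spec i K); [|lia].
      injection H1 as <-. injection H2 as <-. apply Hf. simpl. lia.
    + intros m1 Hm1 m2 Hj. rewrite last_opt_prefix in Hm1. injection Hm1 as <-.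
      apply (Hdead (2 * K) eq_refl).
      rewrite <- (Hlab (2 * K)), <- (Hval K) by (simpl; lia).
      destruct Hj as [Hj|[k [_ [Hj _]]]]; eexists; apply (unfold_edge Hunf), Hj.
    + fold (fact_list FS (prefix s (2 * K))). rewrite fact_list_alternating.
      * rewrite !map_map. apply map_ext_in. intros k Hk. apply in_seq in Hk.
        rewrite Hflab; [reflexivity|simpl; lia].
      * intros j Hj. apply Hpar. simpl. lia.
  - exists f. split; [exact Hf0|split].
    + intros k. apply Hf. exact I.
    + intros k. rewrite Hflab; [reflexivity|exact I].
Qed.


Lemma unfolding_value (B : branch FS -> FS) (Iv : FS -> tv) (Hrt : is_T (lab r)) :
  Fd JF x -> consistent_be JF B -> is_interp Iv ->
  val (J := J) (exist _ r Hrt) B Iv =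
  tneg (tv_sup (fun v => exists sigma : strat FS,
          valid_gen JF PT sigma /\ v = u JF B Iv x sigma tau)).
Proof.
  intros Hx Hc Hi. unfold val, u. apply inf_of_negations. intros w.
  pose proof (outcomes_against FS JF x tau (fun p => Iv (B (b_of_play p))) Vt) as Hout.
  split.
  - intros [b [Hb ->]]. destruct (filtered_branch_play Hrt b Hb) as [p [Hp ->]].
    exists (Iv (B (b_of_play p))). split; [apply Hout; eauto|].
    apply (negated_branch_value FS JF B Iv x tau p); auto.
  - intros [v [Hv ->]]. apply Hout in Hv. destruct Hv as [p [Hp ->]].
    exists (neg_branch (b_of_play p)). split.
    + destruct (play_as_play_of FS JF p (proj1 (proj2 Hp))) as [s [o ->]].
      apply play_filtered_branch; auto.
    + symmetry. apply (negated_branch_value FS JF B Iv x tau p); auto.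
Qed.

End Unfolding.

Section PlayGraph.

Variable FS : fact_space.
Variable JF : jframe FS.
Variables (tau : pstrat FS) (x : FS).

Lemma gen_of_pos_valid : valid_pos JF PF tau -> valid_gen JF PF (gen_of_pos tau).
Proof.
  intros Vt p s _ Hl Ho Hout. unfold gen_of_pos. rewrite (last_opt_last p s _ Hl). auto.
Qed.

Local Notation node := {s : state FS | reach_pos JF tau x s}.
Local Notation pE := (fun a b : node => edge JF (proj1_sig a) (proj1_sig b) /\
                        (owned PF (proj1_sig a) -> proj1_sig b = tau (proj1_sig a))).
Local Notation proot := (exist (reach_pos JF tau x) (ST x) (rp_refl JF tau x)).

Lemma play_graph_unfolds :
  unfolds FS JF x (gen_of_pos tau) node pE (fun a => proj1_sig a) proot.
Proof.
  assert (Hlast : forall ps, path_from node pE proot ps ->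
            gen_of_pos tau (map (fun a => proj1_sig a) ps) = tau (proj1_sig (last ps proot))).
  { intros ps [Hh _]. unfold gen_of_pos. f_equal.
    apply last_map_nonempty. destruct ps; discriminate. }
  split.
  - reflexivity.
  - intros a b [H _]. exact H.
  - intros ps b Hp [_ Hb] Ho. rewrite Hlast by exact Hp. symmetry. apply Hb, Ho.
  - intros ps t Hp He Ho. rewrite Hlast in Ho by exact Hp.
    set (a := last ps proot) in *.
    assert (Ho' : owned PF (proj1_sig a) -> t = tau (proj1_sig a))
      by (intros H; symmetry; auto).
    exists (exist _ t (rp_step (proj2_sig a) He Ho')). simpl. auto.
Qed.

End PlayGraph.

Section PlayTree.

Variable FS : fact_space.
Variable JF : jframe FS.
Variables (tau : strat FS) (x : FS).

Local Notation node := {p : list (state FS) | tree_node JF tau x p}.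
Local Notation tE := (fun a b : node => exists s, proj1_sig b = proj1_sig a ++ [s]).
Local Notation tlab := (fun a : node => last (proj1_sig a) (ST x)).
Local Notation troot := (exist (tree_node JF tau x) [ST x] (tree_root JF tau x)).

Lemma tree_node_nonempty (q : list (state FS)) : tree_node JF tau x q -> q <> [].
Proof. intros [[Hne _] _]. exact Hne. Qed.

Lemma tree_node_snoc (q : list (state FS)) (t : state FS) : tree_node JF tau x q ->
  (tree_node JF tau x (q ++ [t]) <->
   edge JF (last q (ST x)) t /\ (owned PF (last q (ST x)) -> tau q = t)).
Proof.
  intros Hq. pose proof (tree_node_nonempty q Hq) as Hne. destruct Hq as [Hf [Hh Hc]].
  unfold tree_node. rewrite (fpath_snoc FS JF q t (ST x) Hne).
  rewrite (consistent_snoc FS tau PF q t (ST x) Hne).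
  assert (Hhd : hd_error (q ++ [t]) = hd_error q) by (destruct q; [congruence|reflexivity]).
  rewrite Hhd. tauto.
Qed.

Lemma tree_path_labels (ps : list node) :
  path_from node tE troot ps -> proj1_sig (last ps troot) = map tlab ps.
Proof.
  assert (Hgen : forall qs (a0 : node) d, chain tE (a0 :: qs) ->
            proj1_sig (last (a0 :: qs) d) = proj1_sig a0 ++ map tlab qs).
  { induction qs as [|a1 qs IH]; intros a0 d Hc; [simpl; symmetry; apply app_nil_r|].
    destruct Hc as [[s1 Hs1] Hc].
    change (proj1_sig (last (a1 :: qs) d) = proj1_sig a0 ++ tlab a1 :: map tlab qs).
    rewrite IH by exact Hc. simpl. rewrite Hs1, last_last, <- app_assoc. reflexivity. }
  intros [Hh Hc]. destruct ps as [|a0 ps]; [discriminate|]. injection Hh as ->.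
  apply Hgen, Hc.
Qed.

Lemma play_tree_unfolds : unfolds FS JF x tau node tE tlab troot.
Proof.
  split.
  - reflexivity.
  - intros a b [s Hs]. pose proof (proj2_sig b) as Hb. simpl in Hb. rewrite Hs in Hb |- *.
    rewrite last_last. apply (tree_node_snoc _ s (proj2_sig a)), Hb.
  - intros ps b Hp [sb Hsb] Ho. set (q := last ps troot) in *.
    pose proof (proj2_sig b) as Hb. simpl in Hb. rewrite Hsb in Hb.
    apply (tree_node_snoc _ sb (proj2_sig q)) in Hb. destruct Hb as [_ Hmove].
    cbv beta. rewrite Hsb, last_last, <- (tree_path_labels ps Hp). apply Hmove, Ho.
  - intros ps t Hp He Ho. set (q := last ps troot) in *.
    assert (Hqt : tree_node JF tau x (proj1_sig q ++ [t])).
    { apply (tree_node_snoc _ t (proj2_sig q)). split; [exact He|].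
      intros Hown. unfold q. rewrite (tree_path_labels ps Hp). apply Ho, Hown. }
    exists (exist _ _ Hqt). split; [exists t; reflexivity|apply last_last].
Qed.

End PlayTree.

Theorem mainTheorem8 (FS : fact_space) (JF : jframe FS) (B : branch FS -> FS)
  (Hcomp : complementary JF) (Hcons : consistent_be JF B) :
  forall x : FS, Fd JF x ->
  forall Iv : FS -> tv, is_interp Iv ->
  (forall tau : pstrat FS, valid_pos JF PF tau ->
     val (root_pos JF tau x) B Iv =
     tneg (tv_sup (fun v => exists sigma : strat FS,
             valid_gen JF PT sigma /\ v = u JF B Iv x sigma (gen_of_pos tau))))
  /\
  (forall tau : strat FS, valid_gen JF PF tau ->
     val (root_gen JF tau x) B Iv =
     tneg (tv_sup (fun v => exists sigma : strat FS,
             valid_gen JF PT sigma /\ v = u JF B Iv x sigma tau))).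
Proof.
  intros x Hx Iv HI. split.
  - intros tau Vt.
    exact (unfolding_value FS JF x (gen_of_pos tau) _ _ _ _ (play_graph_unfolds FS JF tau x)
             (gen_of_pos_valid FS JF tau Vt) B Iv I Hx Hcons HI).
  - intros tau Vt.
    exact (unfolding_value FS JF x tau _ _ _ _ (play_tree_unfolds FS JF tau x) Vt B Iv I Hx Hcons HI).
Qed.
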